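(* There exist $\alpha_0>0$ and a function $C_2(\alpha)$, polylogarithmic in $1/\alpha$, such that for every $0<\alpha\le\alpha_0$ the following holds. Let $G=(V,E)$ be a graph, $\mathcal T$ a hierarchy of $G$, $h>0$, $X\in\{0,1\}^{h\times V}$ and $U\in\mathbb R^{E\times h}$ semiorthogonal. If a non-root node $t$ is $\alpha$-bad, then there is a $2$-homogeneous set $\mathcal O'(t)\subseteq\mathcal O(t)$ that is $1/C_2(\alpha)$-dominating.
   Context: Graphs are finite, undirected, unweighted, loopless, possibly with parallel edges; each edge $e=\{u,v\}$ has a fixed orientation $u\to v$. $U\in\mathbb R^{E\times h}$ is semiorthogonal if $UU^\intercal=I$; $U^e$ is its row indexed by $e$. $X_v$ is the column of $X$ indexed by $v$, and $X_e=X_u-X_v$. A hierarchy of $G$ is a rooted tree $\mathcal T$ in which every non-leaf node has at least two children and whose leaves are in bijection with $V$; $V(t)$ is the set of vertices at the leaves of the subtree of $t$; for non-root $t$ with parent $t^*$, $\mathcal O(t)$ is the multiset of edges between $V(t)$ and $V(t^* )\setminus V(t)$. A non-root node $t$ is $\alpha$-bad if $\big(\frac1{|\mathcal O(t)|}\sum_{e\in\mathcal O(t)}\langle U^e,X_e\rangle\big)^2\ge\alpha\cdot\frac1{|\mathcal O(t)|}\sum_{e\in\mathcal O(t)}\|X_e\|_2^2$. A set $F$ of edges is $c$-homogeneous if for all $e,f\in F$: $\langle U^e,X_e\rangle^2/\langle U^f,X_f\rangle^2<c$ and $\|X_e\|_2^2/\|X_f\|_2^2<c$ (all quantities nonzero).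 A set $\mathcal O'(t)\subseteq\mathcal O(t)$ is $\gamma$-dominating if $\big(\sum_{e\in\mathcal O'(t)}\langle U^e,X_e\rangle\big)^2\ge\gamma\big(\sum_{e\in\mathcal O(t)}\langle U^e,X_e\rangle\big)^2$. *)

From Stdlib Require Import Reals Lra List Arith Permutation.
Import ListNotations.
Open Scope R_scope.

Definition lsum (f : nat -> R) (l : list nat) : R := fold_right Rplus 0 (map f l).

(* Graph: vertices are 0..n-1; edges are a list of ordered pairs (u,v),
   the pair giving the fixed orientation u -> v.  Edge e is the e-th entry
   of the list, so parallel edges are allowed. *)
Definition graph_ok (n : nat) (E : list (nat * nat)) : Prop :=
  forall e, (e < length E)%nat ->
    let (u, v) := nth e E (0%nat, 0%nat) in (u < n)%nat /\ (v < n)%nat /\ u <> v.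

(* Hierarchy: rooted tree whose leaves are labelled by vertices. *)
Inductive hier : Type :=
| Leaf : nat -> hier
| Node : list hier -> hier.

Fixpoint leaves (t : hier) : list nat :=
  match t with
  | Leaf v => [v]
  | Node cs => (fix go (l : list hier) : list nat :=
                  match l with [] => [] | c :: l' => leaves c ++ go l' end) cs
  end.

Inductive wf_hier : hier -> Prop :=
| wf_leaf v : wf_hier (Leaf v)
| wf_node cs : (2 <= length cs)%nat -> Forall wf_hier cs -> wf_hier (Node cs).

Definition is_hierarchy (n : nat) (T : hier) : Prop :=
  wf_hier T /\ Permutation (leaves T) (seq 0 n).

Inductive subnode : hier -> hier -> Prop :=
| sub_refl t : subnode t t
| sub_child t cs c : In c cs -> subnode t c -> subnode t (Node cs).

Definition has_parent (T t p : hier) : Prop :=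
  subnode p T /\ exists cs, p = Node cs /\ In t cs.

Definition inb (x : nat) (l : list nat) : bool := existsb (Nat.eqb x) l.

(* O(t): indices of edges between V(t) and V(t^* ) \ V(t) (as a list; multiset
   of edges since parallel edges have distinct indices) *)
Definition crossing (Vt Vp : list nat) (uv : nat * nat) : bool :=
  let (u, v) := uv in
  (inb u Vt && inb v Vp && negb (inb v Vt)) ||
  (inb v Vt && inb u Vp && negb (inb u Vt)).

Definition Oset (E : list (nat * nat)) (t p : hier) : list nat :=
  filter (fun e => crossing (leaves t) (leaves p) (nth e E (0%nat, 0%nat)))
         (seq 0 (length E)).

Definition Xe (X : nat -> nat -> R) (E : list (nat * nat)) (e i : nat) : R :=
  let (u, v) := nth e E (0%nat, 0%nat) in X i u - X i v.

Definition ipe (h : nat) (U X : nat -> nat -> R) (E : list (nat * nat)) (e : nat) : R :=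
  lsum (fun i => U e i * Xe X E e i) (seq 0 h).

Definition nsqe (h : nat) (X : nat -> nat -> R) (E : list (nat * nat)) (e : nat) : R :=
  lsum (fun i => (Xe X E e i) ^ 2) (seq 0 h).

Definition binary_matrix (h n : nat) (X : nat -> nat -> R) : Prop :=
  forall i v, (i < h)%nat -> (v < n)%nat -> X i v = 0 \/ X i v = 1.

Definition semiorthogonal (m h : nat) (U : nat -> nat -> R) : Prop :=
  forall e f, (e < m)%nat -> (f < m)%nat ->
    lsum (fun i => U e i * U f i) (seq 0 h) = if Nat.eqb e f then 1 else 0.

Definition bad (alpha : R) (h : nat) (U X : nat -> nat -> R) (E : list (nat * nat))
  (t p : hier) : Prop :=
  let O := Oset E t p in
  (/ INR (length O) * lsum (ipe h U X E) O) ^ 2 >=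
  alpha * (/ INR (length O) * lsum (nsqe h X E) O).

Definition homogeneous (c : R) (h : nat) (U X : nat -> nat -> R) (E : list (nat * nat))
  (F : list nat) : Prop :=
  forall e f, In e F -> In f F ->
    ipe h U X E e <> 0 /\ ipe h U X E f <> 0 /\
    nsqe h X E e <> 0 /\ nsqe h X E f <> 0 /\
    (ipe h U X E e) ^ 2 / (ipe h U X E f) ^ 2 < c /\
    nsqe h X E e / nsqe h X E f < c.

Definition dominating (gamma : R) (h : nat) (U X : nat -> nat -> R)
  (E : list (nat * nat)) (O' O : list nat) : Prop :=
  (lsum (ipe h U X E) O') ^ 2 >= gamma * (lsum (ipe h U X E) O) ^ 2.

Definition polylog_on (alpha0 : R) (C : R -> R) : Prop :=
  exists (c : R) (k : nat), forall alpha, 0 < alpha <= alpha0 ->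
    0 < C alpha /\ C alpha <= c * (1 + ln (/ alpha)) ^ k.

(* Write a e = <U^e, X_e> and b e = ||X_e||^2; semiorthogonality makes every row U^e a
   unit vector, so a e ^ 2 <= b e by Cauchy-Schwarz, and nothing else about the graph or
   the hierarchy is needed.  Let t be alpha-bad with A := mean of a > 0 over the N edges
   of O(t), so that alpha * sum b <= N A^2.  Every edge with a e <= A/4 or
   b e > 16 A^2 / alpha^2 satisfies a e <= A/4 + (alpha / 4A) b e, so these edges carry at
   most half of sum a.  On the remaining edges both a e ^ 2 and b e lie in
   (A^2/16, A^2/16 * 2^J] with J = O(log (1/alpha)); cutting this range into J dyadic bins
   for each of the two quantities, some pair of bins keeps a 1/J^2 fraction of sum a, and
   inside a dyadic bin all ratios are below 2.  This gives C2 = 4 J^4.  A negative sum is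
   reduced to a positive one by replacing a with -a. *)

From Stdlib Require Import Reals Lra Lia List ZArith.
Import ListNotations.
Open Scope R_scope.

Lemma lsum_nil (f : nat -> R) : lsum f [] = 0.
Proof. reflexivity. Qed.

Lemma lsum_cons (f : nat -> R) x l : lsum f (x :: l) = f x + lsum f l.
Proof. reflexivity. Qed.

Lemma lsum_ext (f g : nat -> R) l :
  (forall x, In x l -> f x = g x) -> lsum f l = lsum g l.
Proof.
  induction l as [|x l IH]; intros H; [reflexivity|].
  rewrite !lsum_cons, H, IH; [reflexivity | intros; apply H | ]; simpl; auto.
Qed.

Lemma lsum_le (f g : nat -> R) l :
  (forall x, In x l -> f x <= g x) -> lsum f l <= lsum g l.
Proof.
  induction l as [|x l IH]; intros H; [right; reflexivity|].
  rewrite !lsum_cons.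
  apply Rplus_le_compat; [apply H | apply IH; intros; apply H]; simpl; auto.
Qed.

Lemma lsum_const (c : R) l : lsum (fun _ => c) l = INR (length l) * c.
Proof.
  induction l as [|x l IH]; [rewrite lsum_nil; simpl; ring|].
  rewrite lsum_cons, IH, length_cons, S_INR; ring.
Qed.

Lemma lsum_nonneg (f : nat -> R) l :
  (forall x, In x l -> 0 <= f x) -> 0 <= lsum f l.
Proof.
  intros H. replace 0 with (lsum (fun _ => 0) l).
  - apply lsum_le, H.
  - rewrite lsum_const; ring.
Qed.

Lemma lsum_In_le (f : nat -> R) l x :
  (forall y, In y l -> 0 <= f y) -> In x l -> f x <= lsum f l.
Proof.
  induction l as [|y l IH]; intros H Hx; [destruct Hx|].
  rewrite lsum_cons; destruct Hx as [<-|Hx].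
  - assert (0 <= lsum f l) by (apply lsum_nonneg; intros; apply H; simpl; auto). lra.
  - assert (f x <= lsum f l) by (apply IH; auto; intros; apply H; simpl; auto).
    assert (0 <= f y) by (apply H; simpl; auto). lra.
Qed.

Lemma lsum_add (f g : nat -> R) l :
  lsum (fun x => f x + g x) l = lsum f l + lsum g l.
Proof. induction l as [|x l IH]; rewrite ?lsum_nil, ?lsum_cons; [ring|]. rewrite IH; ring. Qed.

Lemma lsum_scal (c : R) (f : nat -> R) l :
  lsum (fun x => c * f x) l = c * lsum f l.
Proof. induction l as [|x l IH]; rewrite ?lsum_nil, ?lsum_cons; [ring|]. rewrite IH; ring. Qed.

Lemma lsum_opp (f : nat -> R) l : lsum (fun x => - f x) l = - lsum f l.
Proof. induction l as [|x l IH]; rewrite ?lsum_nil, ?lsum_cons; [ring|]. rewrite IH; ring. Qed.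

Lemma lsum_filter (f : nat -> R) (P : nat -> bool) l :
  lsum f l = lsum f (filter P l) + lsum f (filter (fun x => negb (P x)) l).
Proof.
  induction l as [|x l IH]; [rewrite !lsum_nil; ring|].
  simpl; destruct (P x); simpl; rewrite !lsum_cons, IH; ring.
Qed.

Lemma lsum_filter_le (f : nat -> R) (P : nat -> bool) l :
  (forall x, In x l -> 0 <= f x) -> lsum f (filter P l) <= lsum f l.
Proof.
  intros H. pose proof (lsum_filter f P l).
  assert (0 <= lsum f (filter (fun x => negb (P x)) l)).
  { apply lsum_nonneg; intros x Hx; apply filter_In in Hx; apply H; tauto. }
  lra.
Qed.

Lemma lsum_Cauchy_Schwarz (u x : nat -> R) l :
  lsum (fun i => u i * u i) l = 1 ->
  lsum (fun i => u i * x i) l ^ 2 <= lsum (fun i => x i ^ 2) l.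
Proof.
  intros Hu. set (s := lsum (fun i => u i * x i) l).
  assert (H0 : 0 <= lsum (fun i => (x i - s * u i) ^ 2) l)
    by (apply lsum_nonneg; intros; apply pow2_ge_0).
  rewrite (lsum_ext _ (fun i => (x i ^ 2 + - (2 * s) * (u i * x i)) + s ^ 2 * (u i * u i)))
    in H0 by (intros; ring).
  rewrite !lsum_add, !lsum_scal, Hu in H0. fold s in H0. nra.
Qed.

Lemma lsum_le_cover (f : nat -> R) (P : nat -> nat -> bool) l ks :
  (forall e, In e l -> 0 <= f e) ->
  (forall e, In e l -> exists k, In k ks /\ P k e = true) ->
  lsum f l <= lsum (fun k => lsum f (filter (P k) l)) ks.
Proof.
  induction l as [|e l IH]; intros Hf Hcov.
  - apply lsum_nonneg; intros; apply Rle_refl.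
  - rewrite (lsum_ext (fun k => lsum f (filter (P k) (e :: l)))
                       (fun k => (if P k e then f e else 0) + lsum f (filter (P k) l)))
      by (intros k _; simpl; destruct (P k e); rewrite ?lsum_cons; ring).
    rewrite lsum_cons, lsum_add.
    destruct (Hcov e (or_introl eq_refl)) as [k [Hk HPk]].
    assert (f e <= lsum (fun k => if P k e then f e else 0) ks).
    { replace (f e) with ((fun k => if P k e then f e else 0) k) at 1 by (rewrite HPk; reflexivity).
      apply (lsum_In_le (fun k => if P k e then f e else 0)); auto.
      intros k' _; destruct (P k' e); [apply Hf; simpl; auto | apply Rle_refl]. }
    assert (lsum f l <= lsum (fun k => lsum f (filter (P k) l)) ks)
      by (apply IH; intros; [apply Hf | apply Hcov]; simpl; auto).
    lra.
Qed.

Lemma lsum_le_length_mul (g : nat -> R) ks :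
  exists k, lsum g ks <= INR (length ks) * g k.
Proof.
  induction ks as [|x ks [k Hk]]; [exists 0%nat; rewrite lsum_nil; simpl; lra|].
  rewrite lsum_cons, length_cons, S_INR.
  pose proof (pos_INR (length ks)).
  destruct (Rle_lt_dec (g k) (g x)); [exists x | exists k].
  - assert (INR (length ks) * g k <= INR (length ks) * g x)
      by (apply Rmult_le_compat_l; lra).
    lra.
  - lra.
Qed.

Definition Rltb (x y : R) : bool := if Rlt_dec x y then true else false.

Lemma RltbP x y : Rltb x y = true <-> x < y.
Proof. unfold Rltb; destruct (Rlt_dec x y); split; easy. Qed.

Lemma Rltb_false x y : Rltb x y = false <-> y <= x.
Proof. unfold Rltb; destruct (Rlt_dec x y); split; intros; lra || easy. Qed.

Definition in_Ioc (lo hi x : R) : bool := Rltb lo x && negb (Rltb hi x).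

Lemma in_IocP lo hi x : in_Ioc lo hi x = true <-> lo < x <= hi.
Proof.
  unfold in_Ioc. rewrite Bool.andb_true_iff, Bool.negb_true_iff, RltbP, Rltb_false.
  reflexivity.
Qed.

Definition dyadic_bin (L : R) (i : nat) (x : R) : bool := in_Ioc (L * 2 ^ i) (L * 2 ^ S i) x.

Lemma dyadic_bin_exists L J x :
  0 < L -> L < x <= L * 2 ^ J -> exists i, (i < J)%nat /\ dyadic_bin L i x = true.
Proof.
  intros HL [Hlo Hhi]. induction J as [|J IH].
  - simpl in Hhi; lra.
  - destruct (Rle_lt_dec x (L * 2 ^ J)) as [Hx|Hx].
    + destruct (IH Hx) as [i [Hi Hbin]]. exists i; split; [lia | exact Hbin].
    + exists J; split; [lia | apply in_IocP; lra].
Qed.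

Lemma dyadic_bin_pos L i x : 0 < L -> dyadic_bin L i x = true -> 0 < x.
Proof.
  intros HL Hx%in_IocP. pose proof (pow_lt 2 i ltac:(lra)). nra.
Qed.

Lemma dyadic_bin_ratio L i x y :
  0 < L -> dyadic_bin L i x = true -> dyadic_bin L i y = true -> x / y < 2.
Proof.
  intros HL Hx%in_IocP Hy%in_IocP. simpl pow in Hx, Hy.
  pose proof (pow_lt 2 i ltac:(lra)).
  apply Rmult_lt_reg_r with y; [nra|].
  unfold Rdiv; rewrite Rmult_assoc, Rinv_l by nra. nra.
Qed.

Lemma dyadic_pigeonhole L J (f g : nat -> R) l :
  0 < L -> (forall e, In e l -> 0 <= f e) -> (forall e, In e l -> L < g e <= L * 2 ^ J) ->
  exists i, lsum f l <= INR J * lsum f (filter (fun e => dyadic_bin L i (g e)) l).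
Proof.
  intros HL Hf Hg.
  destruct (lsum_le_length_mul (fun i => lsum f (filter (fun e => dyadic_bin L i (g e)) l))
              (seq 0 J)) as [i Hi].
  exists i. rewrite length_seq in Hi. eapply Rle_trans; [|exact Hi].
  apply lsum_le_cover; [exact Hf|].
  intros e He. destruct (dyadic_bin_exists L J (g e) HL (Hg e He)) as [k [Hk Hbin]].
  exists k; split; [apply in_seq; lia | exact Hbin].
Qed.

Lemma dyadic_pigeonhole2 L J (f g1 g2 : nat -> R) l :
  0 < L -> (forall e, In e l -> 0 <= f e) ->
  (forall e, In e l -> L < g1 e <= L * 2 ^ J /\ L < g2 e <= L * 2 ^ J) ->
  exists i j, lsum f l <= INR J ^ 2 *
    lsum f (filter (fun e => dyadic_bin L j (g2 e)) (filter (fun e => dyadic_bin L i (g1 e)) l)).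
Proof.
  intros HL Hf Hg.
  destruct (dyadic_pigeonhole L J f g1 l HL Hf) as [i Hi]; [intros e He; apply (Hg e He)|].
  set (l1 := filter (fun e => dyadic_bin L i (g1 e)) l) in *.
  assert (Hl1 : forall e, In e l1 -> In e l) by (intros e He; apply filter_In in He; tauto).
  destruct (dyadic_pigeonhole L J f g2 l1 HL) as [j Hj];
    [intros e He; apply Hf, Hl1, He | intros e He; apply (Hg e (Hl1 e He)) |].
  exists i, j. pose proof (pos_INR J).
  assert (INR J * lsum f l1 <=
          INR J * (INR J * lsum f (filter (fun e => dyadic_bin L j (g2 e)) l1)))
    by (apply Rmult_le_compat_l; lra).
  simpl pow; rewrite Rmult_1_r, Rmult_assoc; fold l1. lra.
Qed.

Lemma INR_up_bounds y : 0 <= y -> y < INR (Z.to_nat (up y)) <= y + 1.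
Proof.
  intros Hy. destruct (archimed y) as [Hgt Hle].
  rewrite INR_IZR_INZ, Z2Nat.id by (apply le_IZR; lra). lra.
Qed.

Lemma ln_inv_nonneg al : 0 < al <= 1 -> 0 <= ln (/ al).
Proof.
  intros Hal. rewrite ln_Rinv by lra.
  destruct (Req_dec al 1) as [->|Hne]; [rewrite ln_1; lra|].
  pose proof (ln_increasing al 1 ltac:(lra) ltac:(lra)). rewrite ln_1 in *. lra.
Qed.

Definition dyadic_half_depth (al : R) : nat := Z.to_nat (up (2 * ln (/ al))).

(* [2 ln (1/al)] exceeds [log2 (1/al)] because [ln 2 > 1/2]. *)
Lemma inv_le_pow2_half_depth al : 0 < al <= 1 -> / al <= 2 ^ dyadic_half_depth al.
Proof.
  intros Hal. unfold dyadic_half_depth.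
  pose proof (ln_inv_nonneg al Hal) as Hln. pose proof ln_lt_2.
  destruct (INR_up_bounds (2 * ln (/ al))) as [Hk _]; [lra|].
  set (k := Z.to_nat (up (2 * ln (/ al)))) in *.
  rewrite <- Rpower_pow by lra. unfold Rpower.
  rewrite <- (exp_ln (/ al)) at 1 by (apply Rinv_0_lt_compat; lra).
  apply Rlt_le, exp_increasing. nra.
Qed.

Definition dyadic_depth (al : R) : nat := 2 * dyadic_half_depth al + 8.

Lemma dyadic_depth_spec al : 0 < al <= 1 -> 256 / al ^ 2 <= 2 ^ dyadic_depth al.
Proof.
  intros Hal. pose proof (inv_le_pow2_half_depth al Hal).
  assert (0 < / al) by (apply Rinv_0_lt_compat; lra).
  unfold dyadic_depth. rewrite pow_add, Nat.mul_comm, pow_mult.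
  replace (256 / al ^ 2) with ((/ al) ^ 2 * 2 ^ 8) by (field; lra).
  apply Rmult_le_compat_r; [lra|]. apply pow_incr; lra.
Qed.

Lemma dyadic_depth_le al : 0 < al <= 1 -> INR (dyadic_depth al) <= 10 * (1 + ln (/ al)).
Proof.
  intros Hal. pose proof (ln_inv_nonneg al Hal).
  destruct (INR_up_bounds (2 * ln (/ al))) as [_ Hk]; [lra|].
  unfold dyadic_depth, dyadic_half_depth.
  rewrite plus_INR, mult_INR. simpl (INR 2); simpl (INR 8). lra.
Qed.

Definition C2 (al : R) : R := 4 * INR (dyadic_depth al) ^ 4.

Lemma INR_dyadic_depth_pos al : 0 < INR (dyadic_depth al).
Proof. apply lt_0_INR. unfold dyadic_depth. lia. Qed.

Lemma C2_pos al : 0 < C2 al.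
Proof.
  unfold C2. pose proof (pow_lt _ 4 (INR_dyadic_depth_pos al)). lra.
Qed.

Lemma C2_polylog : polylog_on 1 C2.
Proof.
  exists (4 * 10 ^ 4), 4%nat. intros al Hal. split; [apply C2_pos|].
  pose proof (pos_INR (dyadic_depth al)).
  unfold C2. rewrite Rmult_assoc, <- Rpow_mult_distr.
  apply Rmult_le_compat_l; [lra|]. apply pow_incr. split; [lra|].
  apply dyadic_depth_le, Hal.
Qed.

Lemma atypical_le (A al x y : R) :
  0 < A -> 0 < al -> x ^ 2 <= y ->
  (A / 4 < x /\ y <= 16 * A ^ 2 / al ^ 2) \/ x <= A / 4 + al / (4 * A) * y.
Proof.
  intros HA Hal Hxy.
  destruct (Rle_lt_dec x (A / 4)) as [Hx|Hx].
  { right. assert (0 <= al / (4 * A) * y).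
    { apply Rmult_le_pos; [apply Rlt_le, Rdiv_lt_0_compat|]; nra. }
    lra. }
  destruct (Rle_lt_dec y (16 * A ^ 2 / al ^ 2)) as [Hy|Hy]; [left; lra|right].
  (* With [k = 4 A / al]: if [x <= k] then [x <= k^2 / k < y / k],
     and if [x >= k] then [x <= x^2 / k <= y / k]. *)
  set (k := 4 * A / al).
  assert (Hk : 0 < k) by (unfold k; apply Rdiv_lt_0_compat; lra).
  assert (Hkk : k * k < y).
  { unfold k. replace (4 * A / al * (4 * A / al)) with (16 * A ^ 2 / al ^ 2) by (field; lra).
    exact Hy. }
  replace (al / (4 * A)) with (/ k) by (unfold k; field; lra).
  assert (x <= / k * y).
  { apply Rmult_le_reg_l with k; [exact Hk|].
    rewrite <- Rmult_assoc, Rinv_r, Rmult_1_l by lra. nra. }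
  lra.
Qed.

Lemma pow2_ge_of_le_mul k s x : 0 < k -> 0 < s -> s <= k * x -> x ^ 2 >= / k ^ 2 * s ^ 2.
Proof.
  intros Hk Hs Hsx. apply Rle_ge.
  replace (/ k ^ 2 * s ^ 2) with ((s / k) ^ 2) by (field; lra).
  apply pow_incr. split.
  - apply Rlt_le, Rdiv_lt_0_compat; lra.
  - apply Rmult_le_reg_l with k; [exact Hk|].
    replace (k * (s / k)) with s by (field; lra). exact Hsx.
Qed.

Definition mean (f : nat -> R) (l : list nat) : R := / INR (length l) * lsum f l.

Definition pair_homogeneous (a b : nat -> R) (F : list nat) : Prop :=
  forall e f, In e F -> In f F ->
    a e <> 0 /\ b e <> 0 /\ a e ^ 2 / a f ^ 2 < 2 /\ b e / b f < 2.

Lemma pair_homogeneous_of_bins L i j (a b : nat -> R) F :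
  0 < L ->
  (forall e, In e F -> dyadic_bin L i (a e ^ 2) = true /\ dyadic_bin L j (b e) = true) ->
  pair_homogeneous a b F.
Proof.
  intros HL Hbins e f He Hf.
  destruct (Hbins e He) as [Hae Hbe], (Hbins f Hf) as [Haf Hbf].
  pose proof (dyadic_bin_pos L i _ HL Hae). pose proof (dyadic_bin_pos L j _ HL Hbe).
  repeat split.
  - intros Hz; rewrite Hz in *; lra.
  - lra.
  - exact (dyadic_bin_ratio L i _ _ HL Hae Haf).
  - exact (dyadic_bin_ratio L j _ _ HL Hbe Hbf).
Qed.

Lemma pair_homogeneous_opp (a b : nat -> R) F :
  pair_homogeneous (fun e => - a e) b F -> pair_homogeneous a b F.
Proof.
  intros H e f He Hf. destruct (H e f He Hf) as (Ha & Hb & Hra & Hrb).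
  cbv beta in Hra.
  replace ((- a e) ^ 2) with (a e ^ 2) in Hra by ring.
  replace ((- a f) ^ 2) with (a f ^ 2) in Hra by ring.
  repeat split; auto. intros Hz; apply Ha; rewrite Hz; ring.
Qed.

Section Concentration.

Variables (al : R) (a b : nat -> R) (l : list nat).
Hypothesis Hal : 0 < al <= 1.
Hypothesis Hab : forall e, In e l -> a e ^ 2 <= b e.

Definition typical (A : R) (e : nat) : bool :=
  Rltb (A / 4) (a e) && negb (Rltb (16 * A ^ 2 / al ^ 2) (b e)).

Lemma lsum_typical_ge A :
  0 < A -> lsum a l = INR (length l) * A -> al * lsum b l <= INR (length l) * A ^ 2 ->
  lsum a l / 2 <= lsum a (filter (typical A) l).
Proof.
  intros HA HS HB.
  assert (Hatyp : lsum a (filter (fun e => negb (typical A e)) l) <=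
                  lsum (fun e => A / 4 + al / (4 * A) * b e) l).
  { apply Rle_trans with
      (lsum (fun e => A / 4 + al / (4 * A) * b e) (filter (fun e => negb (typical A e)) l)).
    - apply lsum_le. intros e [He Hnt]%filter_In.
      destruct (atypical_le A al (a e) (b e) HA ltac:(lra) (Hab e He)) as [[H1 H2]|H];
        [|exact H].
      unfold typical in Hnt. rewrite (proj2 (RltbP _ _) H1), (proj2 (Rltb_false _ _) H2) in Hnt.
      discriminate.
    - apply lsum_filter_le. intros e He.
      assert (0 <= al / (4 * A) * b e)
        by (apply Rmult_le_pos; [apply Rlt_le, Rdiv_lt_0_compat | pose proof (Hab e He)]; nra).
      lra. }
  rewrite lsum_add, lsum_const, lsum_scal in Hatyp.
  assert (al / (4 * A) * lsum b l <= INR (length l) * A / 4).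
  { replace (al / (4 * A) * lsum b l) with (al * lsum b l * / (4 * A)) by (field; lra).
    replace (INR (length l) * A / 4) with (INR (length l) * A ^ 2 * / (4 * A)) by (field; lra).
    apply Rmult_le_compat_r; [apply Rlt_le, Rinv_0_lt_compat|]; lra. }
  pose proof (lsum_filter a (typical A) l). lra.
Qed.

Lemma typical_range A e :
  0 < A -> In e l -> typical A e = true ->
  A ^ 2 / 16 < a e ^ 2 <= A ^ 2 / 16 * 2 ^ dyadic_depth al /\
  A ^ 2 / 16 < b e <= A ^ 2 / 16 * 2 ^ dyadic_depth al.
Proof.
  intros HA He Ht. unfold typical in Ht.
  apply Bool.andb_true_iff in Ht as [Hlo%RltbP Hhi%Bool.negb_true_iff].
  apply Rltb_false in Hhi. pose proof (Hab e He).
  assert (16 * A ^ 2 / al ^ 2 <= A ^ 2 / 16 * 2 ^ dyadic_depth al).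
  { replace (16 * A ^ 2 / al ^ 2) with (A ^ 2 / 16 * (256 / al ^ 2)) by (field; lra).
    apply Rmult_le_compat_l; [nra | apply dyadic_depth_spec, Hal]. }
  nra.
Qed.

Lemma concentrated_sublist_pos :
  NoDup l -> 0 < lsum a l -> mean a l ^ 2 >= al * mean b l ->
  exists F, NoDup F /\ incl F l /\ pair_homogeneous a b F /\
    lsum a F ^ 2 >= / C2 al * lsum a l ^ 2.
Proof.
  intros Hnd HS Hbad.
  assert (HN : 0 < INR (length l)).
  { apply lt_0_INR. destruct l as [|x l']; [rewrite lsum_nil in HS; lra | simpl; lia]. }
  set (N := INR (length l)) in *. set (A := lsum a l / N).
  assert (HA : 0 < A) by (apply Rdiv_lt_0_compat; lra).
  assert (HSA : lsum a l = N * A) by (unfold A; field; lra).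
  assert (HBA : al * lsum b l <= N * A ^ 2).
  { unfold mean in Hbad. fold N in Hbad.
    replace (/ N * lsum a l) with A in Hbad by (unfold A; field; lra).
    apply Rmult_le_reg_l with (/ N); [apply Rinv_0_lt_compat; lra|].
    replace (/ N * (N * A ^ 2)) with (A ^ 2) by (field; lra). lra. }
  pose proof (lsum_typical_ge A HA HSA HBA) as Hmass.
  set (lg := filter (typical A) l) in *.
  assert (Hlg : forall e, In e lg -> In e l /\ typical A e = true) by (intros e; apply filter_In).
  set (J := dyadic_depth al).
  destruct (dyadic_pigeonhole2 (A ^ 2 / 16) J a (fun e => a e ^ 2) b lg) as [i [j Hij]].
  - nra.
  - intros e [He Ht]%Hlg. apply andb_prop in Ht as [Ht%RltbP _]. lra.
  - intros e [He Ht]%Hlg. exact (typical_range A e HA He Ht).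
  - set (F := filter _ (filter _ lg)) in Hij.
    assert (HF : forall e, In e F ->
              In e l /\ dyadic_bin (A ^ 2 / 16) i (a e ^ 2) = true /\
              dyadic_bin (A ^ 2 / 16) j (b e) = true).
    { intros e [[He%Hlg Hi]%filter_In Hj]%filter_In. tauto. }
    exists F. split; [|split; [|split]].
    + unfold F, lg. repeat apply NoDup_filter. exact Hnd.
    + intros e He. apply HF, He.
    + apply (pair_homogeneous_of_bins (A ^ 2 / 16) i j); [nra|].
      intros e He. split; apply HF, He.
    + unfold C2. fold J. replace (4 * INR J ^ 4) with ((2 * INR J ^ 2) ^ 2) by ring.
      pose proof (INR_dyadic_depth_pos al) as HJ. fold J in HJ.
      apply pow2_ge_of_le_mul; [nra | lra | lra].
Qed.

End Concentration.

Lemma concentrated_sublist al (a b : nat -> R) l :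
  0 < al <= 1 -> NoDup l -> (forall e, In e l -> a e ^ 2 <= b e) ->
  mean a l ^ 2 >= al * mean b l ->
  exists F, NoDup F /\ incl F l /\ pair_homogeneous a b F /\
    lsum a F ^ 2 >= / C2 al * lsum a l ^ 2.
Proof.
  intros Hal Hnd Hab Hbad.
  destruct (Rtotal_order (lsum a l) 0) as [Hneg|[Hz|Hpos]].
  - destruct (concentrated_sublist_pos al (fun e => - a e) b l Hal) as (F & HF1 & HF2 & HF3 & HF4);
      auto.
    + intros e He. replace ((- a e) ^ 2) with (a e ^ 2) by ring. auto.
    + rewrite lsum_opp; lra.
    + unfold mean in *. rewrite lsum_opp. replace ((/ INR (length l) * - lsum a l) ^ 2)
        with ((/ INR (length l) * lsum a l) ^ 2) by ring. exact Hbad.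
    + exists F. rewrite !lsum_opp in HF4. split; [|split; [|split]]; auto.
      * apply pair_homogeneous_opp, HF3.
      * replace (lsum a F ^ 2) with ((- lsum a F) ^ 2) by ring.
        replace (lsum a l ^ 2) with ((- lsum a l) ^ 2) by ring. exact HF4.
  - exists []. split; [|split; [|split]].
    + constructor.
    + apply incl_nil_l.
    + intros e f [].
    + rewrite Hz, lsum_nil. right; ring.
  - apply concentrated_sublist_pos; auto.
Qed.

Lemma ipe_sq_le_nsqe m h (U X : nat -> nat -> R) E e :
  semiorthogonal m h U -> (e < m)%nat -> ipe h U X E e ^ 2 <= nsqe h X E e.
Proof.
  intros HU He. pose proof (HU e e He He) as Hu. rewrite Nat.eqb_refl in Hu.
  exact (lsum_Cauchy_Schwarz (U e) (Xe X E e) (seq 0 h) Hu).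
Qed.

Lemma Oset_lt E t p e : In e (Oset E t p) -> (e < length E)%nat.
Proof. intros [He%in_seq _]%filter_In. lia. Qed.

Lemma Oset_NoDup E t p : NoDup (Oset E t p).
Proof. apply NoDup_filter, seq_NoDup. Qed.

Lemma homogeneous_of_pair h (U X : nat -> nat -> R) E F :
  pair_homogeneous (ipe h U X E) (nsqe h X E) F -> homogeneous 2 h U X E F.
Proof.
  intros H e f He Hf.
  destruct (H e f He Hf) as (? & ? & ? & ?), (H f e Hf He) as (? & ? & _).
  repeat split; assumption.
Qed.

Theorem mainTheorem18 :
  exists (alpha0 : R) (C2 : R -> R),
    0 < alpha0 /\ polylog_on alpha0 C2 /\
    forall (alpha : R), 0 < alpha <= alpha0 ->
    forall (n : nat) (E : list (nat * nat)) (T : hier) (h : nat)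
           (X U : nat -> nat -> R) (t p : hier),
      graph_ok n E ->
      is_hierarchy n T ->
      (0 < h)%nat ->
      binary_matrix h n X ->
      semiorthogonal (length E) h U ->
      has_parent T t p ->
      bad alpha h U X E t p ->
      exists O' : list nat,
        NoDup O' /\ incl O' (Oset E t p) /\
        homogeneous 2 h U X E O' /\
        dominating (/ C2 alpha) h U X E O' (Oset E t p).
Proof.
  exists 1, C2. split; [lra | split; [exact C2_polylog|]].
  intros al Hal n E T h X U t p _ _ _ _ HU _ Hbad.
  destruct (concentrated_sublist al (ipe h U X E) (nsqe h X E) (Oset E t p) Hal (Oset_NoDup E t p))
    as (F & Hnd & Hincl & Hhom & Hdom).
  - intros e He. exact (ipe_sq_le_nsqe _ h U X E e HU (Oset_lt E t p e He)).
  - exact Hbad.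
  - exists F. split; [|split; [|split]]; auto.
    apply homogeneous_of_pair, Hhom.
Qed.
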